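(* Let $A \in \mathbb{C}^{n \times n}$, and fix $A^-\in A\{1\}$ and $A^{GD}\in A\{GD\}$. Then $A^{GD1}=A^{GD}AA^{-}$ is the unique matrix $X \in \mathbb{C}^{n \times n}$ satisfying $$AX = P_{R(A),N(AA^{-})} \quad\text{and}\quad R(X)\subseteq R(A^{GD}A).$$
   Context: For $A\in\mathbb{C}^{n\times n}$, $ind(A)$ is the smallest nonnegative integer $k$ with $\mathrm{rank}(A^k)=\mathrm{rank}(A^{k+1})$. $A\{1\}$ is the set of matrices $X$ with $AXA=A$. With $k=ind(A)$, $A\{GD\}$ is the set of G-Drazin inverses of $A$: matrices $X$ with $AXA=A$, $XA^{k+1}=A^k$, $A^{k+1}X=A^k$. $R(\cdot)$, $N(\cdot)$ denote range and null space; $P_{S,T}$ is the projector onto $S$ along $T$. *)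

From HB Require Import structures.
From mathcomp Require Import all_boot all_order all_algebra zify.
From mathcomp Require Export complex.
From mathcomp Require Export reals.
Set Implicit Arguments. Unset Strict Implicit. Unset Printing Implicit Defensive.
Import Order.TTheory GRing.Theory Num.Theory.
Local Open Scope ring_scope.

Section GDrazin.
Variables (F : fieldType) (n : nat).
Implicit Types A X P : 'M[F]_n.

Lemma index_exists A : exists k, \rank (A ^+ k) == \rank (A ^+ k.+1).
Proof.
have le_rk k : (\rank (A ^+ k.+1) <= \rank (A ^+ k))%N.
  by rewrite exprSr -mulmxE mxrankM_maxl.
case: (boolP [exists k : 'I_n.+1, \rank (A ^+ k) == \rank (A ^+ k.+1)]).
  by case/existsP=> k Hk; exists k.
move/existsPn=> H.
have Hb k : (k <= n.+1)%N -> (\rank (A ^+ k) + k <= n)%N.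
  elim: k => [|k IH] Hk; first by rewrite expr0 addn0 mxrank1.
  have := IH (ltnW Hk); have := H (Ordinal Hk); have := le_rk k.
  move=> h1 h2 h3; rewrite /= in h2.
  have h4 : (\rank (A ^+ k.+1) < \rank (A ^+ k))%N by rewrite ltn_neqAle eq_sym h2 h1.
  lia.
by have := Hb n.+1 (leqnn _); lia.
Qed.

Definition ind A : nat := ex_minn (index_exists A).

Definition inner_inverse A X : Prop := A *m X *m A = A.

Definition GDrazin_inverse A X : Prop :=
  let k := ind A in
  [/\ A *m X *m A = A, X *m A ^+ k.+1 = A ^+ k & A ^+ k.+1 *m X = A ^+ k].

(* Subspaces of F^n (column vectors) are represented, as in mxalgebra, by
   matrices whose ROW space is the subspace (vectors written transposed).
   R(A) = column space of A = row space of A^T.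
   N(A) = {x | A x = 0} = {y^T | y^T A^T = 0} = row space of kermx (A^T). *)
Definition range A : 'M[F]_n := A^T.
Definition nullspace A : 'M[F]_n := kermx A^T.

Definition is_projector_onto_along P (S T : 'M[F]_n) : Prop :=
  [/\ P *m P = P, (range P == S)%MS & (nullspace P == T)%MS].

End GDrazin.

From HB Require Import structures.
From mathcomp Require Import all_boot all_order all_algebra complex reals.
Set Implicit Arguments. Unset Strict Implicit.
Import GRing.Theory Num.Theory.
Local Open Scope ring_scope.

(* For an inner inverse [A^-], [AA^-] is idempotent with column space R(A),
   so it is the projector P_{R(A),N(AA^-)}; since a projector is determined
   by its range and null space, the first condition says exactly AX = AA^-.
   The G-Drazin inverse is also an inner inverse, so [A^GD A] is idempotent
   and fixes every X with R(X) <= R(A^GD A); hence X = A^GD A X = A^GD A A^-. *)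

Section Projectors.
Variables (F : fieldType) (n : nat).
Implicit Types A E P Q X Y : 'M[F]_n.

Lemma range_mulmx_subl A X : (range (A *m X) <= range A)%MS.
Proof. by rewrite /range trmx_mul submxMl. Qed.

Lemma inner_inverse_idem_r A X : inner_inverse A X -> A *m X *m (A *m X) = A *m X.
Proof. by move=> AXA; rewrite mulmxA AXA. Qed.

Lemma inner_inverse_idem_l A X : inner_inverse A X -> X *m A *m (X *m A) = X *m A.
Proof. by move=> AXA; rewrite -mulmxA [A *m _]mulmxA AXA. Qed.

Lemma inner_inverse_range A X : inner_inverse A X -> (range (A *m X) == range A)%MS.
Proof.
by move=> AXA; rewrite range_mulmx_subl -{1}AXA range_mulmx_subl.
Qed.

Lemma idem_mulmx_range E X :
  E *m E = E -> (range X <= range E)%MS -> E *m X = X.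
Proof.
rewrite /range => EE /submxP[D XD].
have -> : X = E *m D^T by rewrite -[X]trmxK XD trmx_mul trmxK.
by rewrite mulmxA EE.
Qed.

Lemma nullspace_sub_mulmx0 E P Y :
  (nullspace E <= nullspace P)%MS -> E *m Y = 0 -> P *m Y = 0.
Proof.
move=> sNEP EY0; apply: trmx_inj; apply/eqP.
rewrite trmx0 trmx_mul -sub_kermx (submx_trans _ sNEP) //.
by rewrite sub_kermx -trmx_mul EY0 trmx0.
Qed.

Lemma projector_onto_along_uniq P Q (S T : 'M[F]_n) :
  is_projector_onto_along P S T -> is_projector_onto_along Q S T -> P = Q.
Proof.
move=> [PP /eqmxP rP /eqmxP nP] [QQ /eqmxP rQ /eqmxP nQ].
have PQ : P *m Q = Q by apply: idem_mulmx_range; rewrite // rP -rQ.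
have PQ'0 : P *m (1%:M - Q) = 0.
  apply: (nullspace_sub_mulmx0 (E := Q)); first by rewrite nP -nQ.
  by rewrite mulmxBr mulmx1 QQ subrr.
by move/eqP: PQ'0; rewrite mulmxBr mulmx1 PQ subr_eq0 => /eqP.
Qed.

Lemma inner_inverse_projector A X :
  inner_inverse A X -> is_projector_onto_along (A *m X) (range A) (nullspace (A *m X)).
Proof.
move=> AXA; split; [exact: inner_inverse_idem_r | exact: inner_inverse_range | ].
exact/eqmxP.
Qed.

End Projectors.

Theorem theorem2p4 (R : realType) (n : nat) (A Am AGD : 'M[R[i]]_n) :
  inner_inverse A Am ->
  GDrazin_inverse A AGD ->
  let AGD1 := AGD *m A *m Am in
  (is_projector_onto_along (A *m AGD1) (range A) (nullspace (A *m Am))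
     /\ (range AGD1 <= range (AGD *m A))%MS)
  /\ (forall X : 'M[R[i]]_n,
        is_projector_onto_along (A *m X) (range A) (nullspace (A *m Am)) ->
        (range X <= range (AGD *m A))%MS ->
        X = AGD1).
Proof.
move=> AAmA [AGDinner _ _] AGD1.
have PAm := inner_inverse_projector AAmA.
have AAGD1 : A *m AGD1 = A *m Am by rewrite /AGD1 !mulmxA AGDinner.
split; first by split; [rewrite AAGD1 | exact: range_mulmx_subl].
move=> X PX sXG.
have AX : A *m X = A *m Am := projector_onto_along_uniq PX PAm.
have GAX : AGD *m A *m X = X.
  exact: idem_mulmx_range (inner_inverse_idem_l AGDinner) sXG.
by rewrite -GAX -mulmxA AX mulmxA.
Qed.
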